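(* Let $n\ge 3$ and let $L\subseteq\Sigma^*$ be a finite or cofinite regular language with state complexity $n$ such that $\sigma(L)=(n-1)!$. Then $|\Sigma|\ge (n-1)!-(n-2)!$. Moreover, this bound is tight: for every $n\ge 3$ there exists a finite or cofinite language over an alphabet of size exactly $(n-1)!-(n-2)!$ with state complexity $n$ and syntactic complexity $(n-1)!$.
   Context: $\Sigma$ is a finite non-empty alphabet. A language is cofinite if its complement is finite. The state complexity of a regular language $L$ is the number of states of its minimal deterministic finite automaton (DFA). The syntactic congruence of $L$ is $x\approx_L y$ iff for all $u,v\in\Sigma^*$, $uxv\in L\Leftrightarrow uyv\in L$; the syntactic semigroup is $\Sigma^+/\approx_L$, and the syntactic complexity $\sigma(L)$ is its cardinality (equivalently, the number of distinct transformations of the states of the minimal DFA of $L$ induced by non-empty words). *)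

From mathcomp Require Import all_boot.
Set Implicit Arguments. Unset Strict Implicit. Unset Printing Implicit Defensive.

Definition language (A : finType) := seq A -> bool.

Record dfa (A : finType) := DFA {
  dfa_state : finType;
  dfa_init : dfa_state;
  dfa_trans : dfa_state -> A -> dfa_state;
  dfa_final : pred dfa_state }.

Definition dfa_accept (A : finType) (M : dfa A) (w : seq A) : bool :=
  @dfa_final A M (foldl (@dfa_trans A M) (@dfa_init A M) w).

Definition recognizes (A : finType) (M : dfa A) (L : language A) : Prop :=
  forall w, dfa_accept M w = L w.

Definition state_complexity (A : finType) (L : language A) (n : nat) : Prop :=
  (exists M : dfa A, recognizes M L /\ #|@dfa_state A M| = n) /\
  (forall M : dfa A, recognizes M L -> n <= #|@dfa_state A M|).

Definition synt_eq (A : finType) (L : language A) (x y : seq A) : Prop :=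
  forall u v : seq A, L (u ++ x ++ v) = L (u ++ y ++ v).

(* sigma(L) = k : the quotient of Sigma^+ by the syntactic congruence has
   exactly k elements, witnessed by a map from non-empty words onto 'I_k whose
   fibres are exactly the congruence classes. *)
Definition synt_complexity (A : finType) (L : language A) (k : nat) : Prop :=
  exists f : seq A -> 'I_k,
    (forall x y, 0 < size x -> 0 < size y -> (f x = f y <-> synt_eq L x y)) /\
    (forall i : 'I_k, exists x, 0 < size x /\ f x = i).

Definition finite_lang (A : finType) (L : language A) : Prop :=
  exists s : seq (seq A), forall w, L w -> w \in s.

Definition cofinite_lang (A : finType) (L : language A) : Prop :=
  exists s : seq (seq A), forall w, ~~ L w -> w \in s.

From mathcomp Require Import all_boot zify.
From Stdlib Require Import ClassicalEpsilon.
Set Implicit Arguments. Unset Strict Implicit. Unset Printing Implicit Defensive.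

(* Lower bound: in the minimal DFA of a finite or cofinite language every state
   on a cycle accepts all words or none, so there is at most one such state, the
   sink. Away from the sink the number of states reachable by nonempty words
   strictly decreases along transitions, so at most [n - j] states have [j >= 2]
   of them; and a state with [j >= 2] successors by words of length at least two
   has more than [j] successors by nonempty words. Hence words of length at
   least two induce at most [prod_q #|succs2 q| <= (n - 2)!] transformations,
   and the other [(n - 1)! - (n - 2)!] syntactic classes must contain a letter.
   Upper bound: on the states [0 .. n - 1] with sink [n - 1], take as letters
   the advancing maps (moving every other state forward) except those moving
   every state at least two steps. Every advancing map is a product of at most
   two letters, so the [(n - 1)!] advancing maps form the transition semigroup,
   and the language only has words shorter than [n - 1]. *)

Definition asbool (P : Prop) : bool := if excluded_middle_informative P then true else false.

Lemma asboolP (P : Prop) : reflect P (asbool P).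
Proof. by rewrite /asbool; case: excluded_middle_informative => h; constructor. Qed.

Section DfaRuns.
Variables (A : finType) (M : dfa A).
Local Notation Q := (dfa_state M).
Local Notation delta := (@dfa_trans A M).
Local Notation final := (@dfa_final A M).
Local Notation init := (@dfa_init A M).

Definition run (q : Q) (w : seq A) : Q := foldl delta q w.

Lemma run_cat q u v : run q (u ++ v) = run (run q u) v.
Proof. exact: foldl_cat. Qed.

Lemma dfa_acceptE w : dfa_accept M w = final (run init w).
Proof. by []. Qed.

Definition reachable (q : Q) : Prop := exists u, run init u = q.

Definition indist (q r : Q) : Prop := forall w, final (run q w) = final (run r w).

Definition word_map (w : seq A) : {ffun Q -> Q} := [ffun q => run q w].

Lemma word_map_cons a w : word_map (a :: w) = [ffun q => word_map w (delta q a)].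
Proof. by apply/ffunP => q; rewrite !ffunE. Qed.

Lemma reachable_init : reachable init. Proof. by exists [::]. Qed.

Lemma reachable_delta q a : reachable q -> reachable (delta q a).
Proof. by case=> u hu; exists (rcons u a); rewrite -cats1 run_cat hu. Qed.

Lemma indist_sym q r : indist q r -> indist r q.
Proof. by move=> h w; rewrite h. Qed.

Lemma indist_trans q r s : indist q r -> indist r s -> indist q s.
Proof. by move=> h1 h2 w; rewrite h1 h2. Qed.

Lemma indist_run q r w : indist q r -> indist (run q w) (run r w).
Proof. by move=> h v; rewrite -!run_cat. Qed.

Lemma word_map_synt_eq (L : language A) x y :
  recognizes M L -> word_map x = word_map y -> synt_eq L x y.
Proof.
move=> rec /ffunP eq_xy u v; rewrite -!rec !dfa_acceptE !run_cat.
by have := eq_xy (run init u); rewrite !ffunE => ->.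
Qed.

End DfaRuns.

Section QuotientDfa.
Variables (A : finType) (M : dfa A).
Local Notation Q := (dfa_state M).
Local Notation delta := (@dfa_trans A M).
Local Notation final := (@dfa_final A M).
Local Notation init := (@dfa_init A M).

(* The reachable states modulo [indist]: each class is represented by a chosen
   reachable member, its canonical state. *)
Definition canon (q : Q) : Q :=
  odflt q [pick r | asbool (reachable r) && asbool (indist r q)].

Lemma canonP q : reachable q -> reachable (canon q) /\ indist (canon q) q.
Proof.
by move=> hq; rewrite /canon; case: pickP => [r /andP[/asboolP ? /asboolP ?] | _].
Qed.

Lemma canon_indist q r : reachable q -> indist q r -> canon q = canon r.
Proof.
move=> hq hqr; rewrite /canon.
rewrite (@eq_pick _ _ [pred x | asbool (reachable x) && asbool (indist x r)]).
  case: pickP => [//|none]; have /= := none q.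
  by rewrite (introT (asboolP _) hq) (introT (asboolP _) hqr).
move=> x /=; congr andb; apply/asboolP/asboolP => h; first exact: indist_trans h hqr.
exact: indist_trans h (indist_sym hqr).
Qed.

Definition is_canon (q : Q) : bool := asbool (reachable q) && (canon q == q).

Lemma is_canon_canon q : reachable q -> is_canon (canon q).
Proof.
move=> hq; have [reach_c indist_c] := canonP hq.
rewrite /is_canon (canon_indist reach_c indist_c) eqxx andbT.
exact/asboolP.
Qed.

Lemma reachable_val (d : {q | is_canon q}) : reachable (val d).
Proof. by case: d => q /= /andP[/asboolP]. Qed.

Definition quotient_dfa : dfa A :=
  @DFA A {q | is_canon q} (exist _ (canon init) (is_canon_canon (reachable_init M)))
    (fun d a => exist _ (canon (delta (val d) a))
                  (is_canon_canon (reachable_delta a (reachable_val d))))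
    (fun d => final (val d)).

Lemma quotient_dfa_run (d : dfa_state quotient_dfa) w :
  indist (val (run d w)) (run (val d) w).
Proof.
elim: w d => [|a w IH] d /=; first by move=> v.
apply: indist_trans (IH _) (indist_run w _).
exact: (canonP (reachable_delta a (reachable_val d))).2.
Qed.

Lemma quotient_dfa_accept w : dfa_accept quotient_dfa w = dfa_accept M w.
Proof.
have := quotient_dfa_run (dfa_init quotient_dfa) w => /(_ [::]) /= ->.
exact: (indist_run w (canonP (reachable_init M)).2 [::]).
Qed.

Lemma quotient_dfa_card_reachable_reduced :
  #|Q| <= #|dfa_state quotient_dfa| ->
  (forall q : Q, reachable q) /\ (forall q r : Q, indist q r -> q = r).
Proof.
move=> card_le.
have all_canon q : is_canon q.
  suff /(_ q) : [pred q | is_canon q] =i predT by [].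
  apply/subset_cardP; last exact/subsetP.
  by apply/eqP; rewrite eqn_leq max_card /=; apply: leq_trans card_le _; rewrite card_sig.
split=> [q | q r hqr]; first by have /andP[/asboolP] := all_canon q.
have /andP[/asboolP reach_q /eqP <-] := all_canon q.
have /andP[_ /eqP <-] := all_canon r.
exact: canon_indist.
Qed.
End QuotientDfa.

Lemma minimal_dfa_reachable_reduced (A : finType) (L : language A) (M : dfa A) :
  recognizes M L -> (forall M' : dfa A, recognizes M' L -> #|dfa_state M| <= #|dfa_state M'|) ->
  (forall q : dfa_state M, reachable q) /\ (forall q r : dfa_state M, indist q r -> q = r).
Proof.
move=> rec minimal; apply: quotient_dfa_card_reachable_reduced; apply: minimal => w.
by rewrite quotient_dfa_accept.
Qed.

Section ReducedDfa.
Variables (A : finType) (L : language A) (M : dfa A).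
Local Notation Q := (dfa_state M).
Local Notation init := (@dfa_init A M).
Hypothesis M_L : recognizes M L.

Lemma accept_run q u w : run init u = q -> L (u ++ w) = dfa_final (run q w).
Proof. by move=> <-; rewrite -M_L dfa_acceptE run_cat. Qed.

(* A class of a word of length at least two is determined by its word map, one
   of length one by its letter. *)
Lemma synt_complexity_le (T : {set {ffun Q -> Q}}) k :
  (forall w, 1 < size w -> word_map M w \in T) -> synt_complexity L k -> k <= #|A| + #|T|.
Proof.
move=> T_long [f [f_synt f_onto]].
have witP i : exists w, (0 < size w) && (f w == i).
  by have [w [w_gt0 <-]] := f_onto i; exists w; rewrite w_gt0 eqxx.
pose wit i := xchoose (witP i).
have wit_gt0 i : 0 < size (wit i) by have /andP[] := xchooseP (witP i).
have f_wit i : f (wit i) = i by have /andP[_ /eqP] := xchooseP (witP i).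
pose g i : A + {ffun Q -> Q} := if wit i is [:: a] then inl a else inr (word_map M (wit i)).
have g_inj : injective g.
  move=> i j g_ij; rewrite -[i]f_wit -[j]f_wit; apply/f_synt => //.
  move: g_ij (wit_gt0 i) (wit_gt0 j); rewrite /g.
  case: (wit i) => [|a [|b u]] //; case: (wit j) => [|c [|d v]] //=.
  - by move=> [->].
  - by move=> [/(word_map_synt_eq M_L)].
have g_range : g @: setT \subset inl @: setT :|: inr @: T.
  apply/subsetP => _ /imsetP[i _ ->]; rewrite /g.
  have := wit_gt0 i; case: (wit i) => [|a [|b u]] //= _; rewrite inE.
    by rewrite imset_f ?inE.
  by rewrite orbC imset_f ?T_long.
have := subset_leq_card g_range; rewrite card_imset // cardsT card_ord => /leq_trans; apply.
apply: leq_trans (leq_card_setU _ _).1 _; apply: leq_add.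
  by rewrite -(cardsT A); exact: leq_imset_card.
exact: leq_imset_card.
Qed.

Hypotheses (M_reachable : forall q : Q, reachable q)
  (M_reduced : forall q r : Q, indist q r -> q = r).

Lemma synt_eq_word_map x y : synt_eq L x y -> word_map M x = word_map M y.
Proof.
move=> xy; apply/ffunP => q; rewrite !ffunE; apply: M_reduced => w.
have [u reach_q] := M_reachable q.
rewrite -!run_cat -!(accept_run _ reach_q); exact: xy.
Qed.

Lemma reduced_dfa_state_complexity : state_complexity L #|Q|.
Proof.
split=> [|M' M'_L]; first by exists M.
have access q : exists u, run init u == q.
  by have [u <-] := M_reachable q; exists u.
pose g q := run (dfa_init M') (xchoose (access q)).
have g_inj : injective g.
  move=> p q gpq; apply: M_reduced => w.
  have /eqP reach_p := xchooseP (access p).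
  have /eqP reach_q := xchooseP (access q).
  rewrite -(accept_run _ reach_p) -(accept_run _ reach_q) -!M'_L !dfa_acceptE.
  by rewrite !run_cat -/(g p) -/(g q) gpq.
exact: leq_card g_inj.
Qed.

Lemma synt_complexity_word_maps (S : {set {ffun Q -> Q}}) t0 :
  t0 \in S -> (forall w, 0 < size w -> word_map M w \in S) ->
  (forall t, t \in S -> exists2 w, 0 < size w & word_map M w = t) ->
  synt_complexity L #|S|.
Proof.
move=> S_t0 S_words S_onto.
exists (fun w => enum_rank_in S_t0 (word_map M w)); split=> [x y x_gt0 y_gt0 | i].
  split=> [/(congr1 enum_val) | /synt_eq_word_map -> //].
  by rewrite !enum_rankK_in ?S_words // => /(word_map_synt_eq M_L).
have [w w_gt0 w_map] := S_onto _ (enum_valP i).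
by exists w; rewrite w_map enum_valK_in.
Qed.
End ReducedDfa.

Section LoopingStates.
Variables (A : finType) (M : dfa A) (c : bool) (s : seq (seq A)).
Local Notation Q := (dfa_state M).
Local Notation final := (@dfa_final A M).
Hypotheses (M_reachable : forall q : Q, reachable q)
  (M_reduced : forall q r : Q, indist q r -> q = r)
  (M_almost_const : forall w, dfa_accept M w != c -> w \in s).

Definition succs (q : Q) : {set Q} :=
  [set r | asbool (exists2 w : seq A, 0 < size w & run q w = r)].

Definition succs2 (q : Q) : {set Q} :=
  [set r | asbool (exists2 w : seq A, 1 < size w & run q w = r)].

Definition looping (q : Q) : bool := q \in succs q.

Lemma succsP q r : reflect (exists2 w, 0 < size w & run q w = r) (r \in succs q).
Proof. by rewrite inE; apply: asboolP. Qed.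

Lemma succs2P q r : reflect (exists2 w, 1 < size w & run q w = r) (r \in succs2 q).
Proof. by rewrite inE; apply: asboolP. Qed.

Lemma succs_trans q r x : r \in succs q -> x \in succs r -> x \in succs q.
Proof.
move=> /succsP[u u_gt0 <-] /succsP[v v_gt0 <-]; apply/succsP; exists (u ++ v).
  by rewrite size_cat addn_gt0 u_gt0.
by rewrite run_cat.
Qed.

Lemma delta_succs q a : dfa_trans q a \in succs q.
Proof. by apply/succsP; exists [:: a]. Qed.

Lemma succs2_sub q : succs2 q \subset succs q.
Proof. by apply/subsetP => r /succs2P[w /ltnW w_gt0 <-]; apply/succsP; exists w. Qed.

Lemma run_iter (q : Q) v k : run q v = q -> run q (flatten (nseq k v)) = q.
Proof. by move=> loop_v; elim: k => //= k IH; rewrite run_cat loop_v. Qed.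

(* Pumping the loop would otherwise put arbitrarily long words into [s]. *)
Lemma looping_final q w : looping q -> final (run q w) = c.
Proof.
move=> /succsP[v v_gt0 loop_v]; apply/eqP; apply: contraT => final_w.
have [u reach_q] := M_reachable q.
pose K := \max_(x <- s) size x.
have pumped_in_s : u ++ flatten (nseq K.+1 v) ++ w \in s.
  by apply: M_almost_const; rewrite dfa_acceptE run_cat reach_q run_cat run_iter.
have := @leq_bigmax_seq _ _ xpredT size _ pumped_in_s isT; rewrite -/K.
rewrite !size_cat size_flatten /shape map_nseq sumn_nseq -/K.
rewrite leqNgt => /negP[]; by rewrite -mulnS addnCA ltn_addr // leq_pmull.
Qed.

Lemma looping_succs_eq q r : looping q -> r \in succs q -> r = q.
Proof.
by move=> q_loop /succsP[v _ <-]; apply: M_reduced => w; rewrite -run_cat !looping_final.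
Qed.

Lemma looping_eq q r : looping q -> looping r -> q = r.
Proof. by move=> q_loop r_loop; apply: M_reduced => w; rewrite !looping_final. Qed.

Lemma looping_card_succs q : looping q -> #|succs q| = 1.
Proof.
move=> q_loop; suff -> : succs q = [set q] by rewrite cards1.
apply/setP => r; rewrite inE.
by apply/idP/eqP => [|->//]; apply: looping_succs_eq.
Qed.

Lemma card_succs_lt q r : r \in succs q -> ~~ looping r -> #|succs r| < #|succs q|.
Proof.
move=> r_succ r_noloop; apply: proper_card; rewrite properE.
apply/andP; split; first by apply/subsetP => x; apply: succs_trans.
by apply/subsetPn; exists r.
Qed.

(* Among the states with at least [j] successors, the successors of the one
   with the fewest all have fewer than [j] successors. *)
Lemma card_succs_ge j : 1 < j -> #|[set q | j <= #|succs q|]| <= #|Q| - j.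
Proof.
move=> j_gt1; have [-> | [q0]] := set_0Vmem [set q | j <= #|succs q|].
  by rewrite cards0.
rewrite inE => q0_big.
have [qm j_le_qm qm_min] :=
  arg_minnP (P := fun q => j <= #|succs q|) (fun q => #|succs q|) q0_big.
have qm_noloop : ~~ looping qm.
  by apply: contraTN j_le_qm => /looping_card_succs ->; rewrite -ltnNge.
have big_sub : [set q | j <= #|succs q|] \subset ~: succs qm.
  apply/subsetP => r; rewrite in_setC [r \in [set _ | _]]inE.
  apply: contraTN => r_succ; rewrite -ltnNge.
  case r_loop: (looping r); first by rewrite looping_card_succs.
  rewrite ltnNge; apply: contraL (card_succs_lt r_succ (negbT r_loop)).
  by move=> /qm_min; rewrite -leqNgt.
have := subset_leq_card big_sub; have := cardsC (succs qm); lia.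
Qed.

(* A non-looping successor [r] of [q] with the most successors can only be
   reached from [q] by a single letter. *)
Lemma card_succs2_lt q : 1 < #|succs2 q| -> #|succs2 q| < #|succs q|.
Proof.
move=> /card_gt1P[x [y [x_in y_in x_neq_y]]].
have [r0 r0_succ r0_noloop] : exists2 r, r \in succs q & ~~ looping r.
  have sub := subsetP (succs2_sub q).
  case x_loop: (looping x); last by exists x; [exact: sub | rewrite x_loop].
  case y_loop: (looping y); last by exists y; [exact: sub | rewrite y_loop].
  by move: x_neq_y; rewrite (looping_eq x_loop y_loop) eqxx.
have [r /andP[r_succ r_noloop] r_max] :=
  arg_maxnP (P := fun r => (r \in succs q) && ~~ looping r) (fun r => #|succs r|)
    (introT andP (conj r0_succ r0_noloop)).
apply: proper_card; rewrite properE succs2_sub; apply/subsetPn; exists r => //.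
apply/succs2P => -[[|a [|b w]] //= _ run_r].
have r_succ_a : r \in succs (dfa_trans q a) by apply/succsP; exists (b :: w).
case a_loop: (looping (dfa_trans q a)).
  by move: r_noloop; rewrite (looping_succs_eq a_loop r_succ_a) a_loop.
have := r_max _ (introT andP (conj (delta_succs q a) (negbT a_loop))).
by move=> /(leq_trans (card_succs_lt r_succ_a r_noloop)); rewrite ltnn.
Qed.

Lemma card_succs2_ge j : 1 < j -> #|[set q | j <= #|succs2 q|]| <= #|Q|.-1 - j.
Proof.
move=> j_gt1; have sub : [set q | j <= #|succs2 q|] \subset [set q | j.+1 <= #|succs q|].
  apply/subsetP => q; rewrite !inE => j_le.
  exact: leq_ltn_trans j_le (card_succs2_lt (leq_trans j_gt1 j_le)).
rewrite -subn1 -subnDA add1n (leq_trans (subset_leq_card sub)) //.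
exact: card_succs_ge (ltnW j_gt1 : 1 < j.+1).
Qed.
End LoopingStates.

Lemma prod_le1 (I : finType) (P : pred I) (F : I -> nat) :
  (forall i, P i -> F i <= 1) -> \prod_(i | P i) F i <= 1.
Proof.
by move=> F_le1; elim/big_ind: _ => // x y x_le1 y_le1; rewrite -[1]/(1 * 1) leq_mul.
Qed.

(* At most [m + 1 - j] factors reach [j]: remove the largest one, which is at
   most [m], and induct. *)
Lemma prod_le_fact (I : finType) (P : pred I) (F : I -> nat) m :
  (forall j, 1 < j -> #|[set i | P i & j <= F i]| <= m.+1 - j) ->
  \prod_(i | P i) F i <= m`!.
Proof.
elim: m P => [|m IH] P bound.
  apply: prod_le1 => i P_i; rewrite leqNgt; apply/negP => F_i.
  by have := bound 2 isT; rewrite (cardD1 i) inE P_i F_i.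
case: (pickP [pred i | P i & 1 < F i]) => [i1 /andP[P_i1 F_i1] | small]; last first.
  apply: (leq_trans _ (fact_gt0 _)); apply: prod_le1 => i P_i.
  by have /= := small i; rewrite P_i ltnNge => /negbFE.
have [i0 P_i0 i0_max] := arg_maxnP F P_i1.
have F_i0_gt1 : 1 < F i0 := leq_trans F_i1 (i0_max i1 P_i1).
have F_i0_le : F i0 <= m.+1.
  by have := bound _ F_i0_gt1; rewrite (cardD1 i0) inE P_i0 leqnn; lia.
rewrite (bigD1 i0) //= factS leq_mul //; apply: IH => j j_gt1.
case: (leqP j (F i0)) => [j_le | j_gt].
  have := bound j j_gt1; rewrite (cardD1 i0) inE P_i0 j_le.
  suff -> : #|[set i | P i && (i != i0) & j <= F i]| =
            #|[predD1 [set i | P i & j <= F i] & i0]| by lia.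
  by apply: eq_card => i; rewrite !inE -andbA andbCA.
suff -> : [set i | P i && (i != i0) & j <= F i] = set0 by rewrite cards0.
apply/setP => i; rewrite !inE; apply/negbTE/andP => -[/andP[P_i _]].
by rewrite leqNgt (leq_ltn_trans (i0_max i P_i) j_gt).
Qed.

Lemma finite_cofinite_almost_const (A : finType) (L : language A) :
  finite_lang L \/ cofinite_lang L -> exists c (s : seq (seq A)), forall w, L w != c -> w \in s.
Proof.
by case=> -[s L_s]; [exists false | exists true]; exists s => w; case: (L w) (L_s w) => // ->.
Qed.

Lemma alphabet_lower_bound (A : finType) (L : language A) n :
  finite_lang L \/ cofinite_lang L -> state_complexity L n ->
  synt_complexity L (n.-1)`! -> (n.-1)`! - (n.-2)`! <= #|A|.
Proof.
move=> fin_cofin [[M [M_L card_M]] minimal] sigma_L.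
have [M_reachable M_reduced] :
    (forall q : dfa_state M, reachable q) /\ (forall q r : dfa_state M, indist q r -> q = r).
  by apply: minimal_dfa_reachable_reduced M_L _; rewrite card_M.
have [c [s L_almost_const]] := finite_cofinite_almost_const fin_cofin.
have M_almost_const w : dfa_accept M w != c -> w \in s by rewrite M_L; apply: L_almost_const.
pose T := setXn (fun q : dfa_state M => succs2 q).
have T_long w : 1 < size w -> word_map M w \in T.
  by move=> w_gt1; apply/setXnP => q; rewrite ffunE; apply/succs2P; exists w.
have card_T : #|T| <= (n.-2)`!.
  rewrite cardsXn; apply: (@prod_le_fact _ xpredT) => j j_gt1.
  apply: leq_trans (card_succs2_ge M_reachable M_reduced M_almost_const j_gt1) _.
  by rewrite card_M leq_sub2r // leqSpred.
rewrite leq_subLR addnC (leq_trans (synt_complexity_le M_L T_long sigma_L)) //.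
by rewrite leq_add2l.
Qed.

Lemma finite_lang_size_le (A : finType) (L : language A) K :
  (forall w, L w -> size w <= K) -> finite_lang L.
Proof.
move=> L_short; exists (flatten [seq [seq tval t | t : k.-tuple A] | k <- iota 0 K.+1]).
move=> w /L_short w_le; apply/flattenP; exists [seq tval t | t : (size w).-tuple A].
  by apply/mapP; exists (size w); rewrite // mem_iota.
by apply/mapP; exists (in_tuple w); rewrite ?mem_enum.
Qed.

Lemma card_ord_ge N k : #|[set j : 'I_N | k <= j]| = N - k.
Proof.
have := @big_geq_mkord _ _ addn k N xpredT (fun=> 1).
rewrite sum_nat_const_nat muln1 -sum1_card => ->.
by apply: eq_bigl => j; rewrite inE.
Qed.

Lemma prod_ord_sub k : \prod_(i < k) (k - i) = k`!.
Proof.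
elim: k => [|k IH]; first by rewrite big_ord0.
by rewrite big_ord_recl subn0 factS -IH; congr (_ * _); apply: eq_bigr => i _.
Qed.

Section ChainDfa.
Variable n : nat.
Hypothesis n_gt1 : 1 < n.
Local Notation state := 'I_n.+1.

(* The witness for [n + 1] states: [0] is initial, [n.-1] final and [n] the sink. *)
Definition advancing : {set {ffun state -> state}} :=
  setXn (fun i : state => [set j : state | minn i.+1 n <= j]).

Definition skipping : {set {ffun state -> state}} :=
  setXn (fun i : state => [set j : state | minn i.+2 n <= j]).

Definition letters : {set {ffun state -> state}} := advancing :\: skipping.

Lemma advancingP (t : {ffun state -> state}) :
  reflect (forall i : state, minn i.+1 n <= t i) (t \in advancing).
Proof. by apply: (iffP setXnP) => t_ge i; have := t_ge i; rewrite inE. Qed.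

Lemma skippingP (t : {ffun state -> state}) :
  reflect (forall i : state, minn i.+2 n <= t i) (t \in skipping).
Proof. by apply: (iffP setXnP) => t_ge i; have := t_ge i; rewrite inE. Qed.

Lemma card_advancing : #|advancing| = n`!.
Proof.
rewrite cardsXn big_ord_recr /= -prod_ord_sub card_ord_ge (minn_idPr (leqnSn n)) subSnn.
by rewrite muln1; apply: eq_bigr => i _; rewrite card_ord_ge (minn_idPl (ltn_ord i)).
Qed.

Lemma card_skipping : #|skipping| = n.-1`!.
Proof.
rewrite cardsXn; under eq_bigr => i _ do rewrite card_ord_ge.
have [k ->] : exists k, n = k.+2 by exists n.-2; rewrite -subn2 -addn2 subnK.
rewrite big_ord_recr big_ord_recr /= -prod_ord_sub.
rewrite !(minn_idPr _) ?subSnn ?muln1 ?(leqnSn, ltnW) //.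
apply: eq_bigr => i _; rewrite (minn_idPl (_ : i.+2 <= k.+2)) ?subSS //.
by rewrite ltnS; exact: ltn_ord.
Qed.

Lemma skipping_sub : skipping \subset advancing.
Proof.
apply/subsetP => t /skippingP t_ge; apply/advancingP => i.
by apply: leq_trans (t_ge i); rewrite leq_min geq_minr andbT (leq_trans (geq_minl _ _)).
Qed.

Lemma card_letters : #|letters| = n`! - n.-1`!.
Proof. by rewrite cardsD (setIidPr skipping_sub) card_advancing card_skipping. Qed.

Lemma letters_advancing t : t \in letters -> t \in advancing.
Proof. by rewrite inE => /andP[]. Qed.

Lemma advancing_letters (t : {ffun state -> state}) :
  t \in advancing -> t ord0 = 1 :> nat -> t \in letters.
Proof.
move=> t_adv t0; rewrite inE t_adv andbT; apply/skippingP => /(_ ord0).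
by rewrite t0 (minn_idPl n_gt1).
Qed.

Lemma advancing_comp t1 t2 :
  t1 \in advancing -> t2 \in advancing -> [ffun i => t2 (t1 i)] \in advancing.
Proof.
move=> /advancingP t1_ge /advancingP t2_ge; apply/advancingP => i; rewrite ffunE.
apply: leq_trans (t1_ge i) (leq_trans _ (t2_ge (t1 i))).
by rewrite leq_min leqnSn -ltnS ltn_ord.
Qed.

Definition shift : {ffun state -> state} := [ffun i : state => inord (minn i.+1 n)].

Lemma shiftE (i : state) : shift i = minn i.+1 n :> nat.
Proof. by rewrite ffunE inordK // ltnS geq_minr. Qed.

Lemma shift_letters : shift \in letters.
Proof.
apply: advancing_letters; first by apply/advancingP => i; rewrite shiftE.
by rewrite shiftE (minn_idPl (ltnW n_gt1)).
Qed.

(* Every skipping map is [shift] followed by the letter [unshift t]. *)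
Definition unshift (t : {ffun state -> state}) : {ffun state -> state} :=
  [ffun j => if j == ord0 then inord 1 else t (inord j.-1)].

Lemma unshift_letters t : t \in skipping -> unshift t \in letters.
Proof.
move=> /skippingP t_ge; apply: advancing_letters.
  2: by rewrite ffunE eqxx inordK // ltnS ltnW.
apply/advancingP => j; rewrite ffunE; case: eqP => [-> | /eqP j_neq0].
  by rewrite inordK ?geq_minl // ltnS ltnW.
have j_gt0 : 0 < j by rewrite lt0n.
have := t_ge (inord j.-1); rewrite inordK; first by rewrite prednK.
exact: leq_ltn_trans (leq_pred _) (ltn_ord j).
Qed.

Lemma unshift_shift t : t \in skipping -> [ffun q => unshift t (shift q)] = t.
Proof.
move=> /skippingP t_ge; apply/ffunP => q; rewrite ffunE [unshift _ _]ffunE.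
have -> : (shift q == ord0) = false.
  by apply/negbTE; rewrite -(inj_eq val_inj) /= shiftE -lt0n leq_min (ltnW n_gt1).
have t_top (i : state) : n.-1 <= i -> t i = n :> nat.
  move=> i_ge; apply/eqP; rewrite eqn_leq -ltnS ltn_ord /=.
  apply: leq_trans (t_ge i); rewrite leq_min leqnn andbT; lia.
case: (ltnP q n) => [q_lt | q_ge].
  by congr (t _); apply: val_inj; rewrite /= shiftE (minn_idPl q_lt) /= inordK // ltnW.
have q_n : q = n :> nat by apply/eqP; rewrite eqn_leq -ltnS ltn_ord.
apply: ord_inj; rewrite !t_top ?q_n ?leq_pred // shiftE q_n (minn_idPr (leqnSn n)).
by rewrite inordK // ltnS leq_pred.
Qed.

Local Notation letter := {t : {ffun state -> state} | t \in letters}.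

Definition chain_dfa : dfa letter :=
  @DFA letter state ord0 (fun q a => val a q) (fun q => q == n.-1 :> nat).

Definition chain_lang : language letter := dfa_accept chain_dfa.

Lemma word_map_advancing w : 0 < size w -> word_map chain_dfa w \in advancing.
Proof.
elim: w => // a [|b w] IH _.
  suff -> : word_map chain_dfa [:: a] = val a by exact: letters_advancing (valP a).
  by apply/ffunP => q; rewrite ffunE.
by rewrite word_map_cons; apply: advancing_comp (letters_advancing (valP a)) (IH isT).
Qed.

Lemma advancing_word_map t :
  t \in advancing -> exists2 w, 0 < size w & word_map chain_dfa w = t.
Proof.
move=> t_adv; case t_letter: (t \in letters).
  by exists [:: exist _ t t_letter] => //; apply/ffunP => q; rewrite ffunE.
have t_skip : t \in skipping by move: t_letter; rewrite inE t_adv andbT => /negbFE.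
exists [:: exist _ shift shift_letters; exist _ (unshift t) (unshift_letters t_skip)] => //.
by rewrite -[RHS](unshift_shift t_skip); apply/ffunP => q; rewrite !ffunE.
Qed.

Lemma chain_run_ge (q : dfa_state chain_dfa) w : minn (q + size w) n <= run q w.
Proof.
elim: w q => [|a w IH] q /=; first by rewrite addn0 geq_minl.
apply: leq_trans (IH (val a q)); move/advancingP: (letters_advancing (valP a)) => /(_ q).
by case: (val a q) => x x_lt /=; have := ltn_ord q; lia.
Qed.

Lemma chain_lang_size w : chain_lang w -> size w <= n.-1.
Proof.
rewrite /chain_lang dfa_acceptE => /eqP accept_w.
by have := chain_run_ge ord0 w; rewrite accept_w; lia.
Qed.

Lemma chain_reachable (q : dfa_state chain_dfa) : reachable q.
Proof.
have [q0 | q_gt0] := posnP q; first by exists [::]; apply: ord_inj; rewrite q0.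
pose t : {ffun state -> state} := [ffun i => if i == ord0 then q else ord_max].
have t_adv : t \in advancing.
  apply/advancingP => i; rewrite ffunE; case: eqP => [-> | _]; last exact: geq_minr.
  exact: leq_trans (geq_minl _ _) q_gt0.
have [w _ w_t] := advancing_word_map t_adv.
by exists w; move/ffunP: w_t => /(_ ord0); rewrite !ffunE eqxx.
Qed.

Lemma chain_separate (p q : dfa_state chain_dfa) :
  p < q -> exists w, (run p w == n.-1 :> nat) && (run q w != n.-1 :> nat).
Proof.
move=> p_lt_q; have [p_final | p_nonfinal] := eqVneq (p : nat) n.-1.
  by exists [::]; rewrite /= p_final eqxx -p_final neq_ltn p_lt_q orbT.
pose t : {ffun state -> state} := [ffun i => if i == p then inord n.-1 else ord_max].
have t_adv : t \in advancing.
  apply/advancingP => i; rewrite ffunE; case: eqP => [-> | _]; last exact: geq_minr.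
  rewrite inordK; last by rewrite ltnS leq_pred.
  by have := ltn_ord q; move: p_lt_q p_nonfinal; lia.
have [w _ w_t] := advancing_word_map t_adv.
have run_w (r : dfa_state chain_dfa) : run r w = t r by rewrite -w_t ffunE.
exists w; rewrite !run_w !ffunE eqxx inordK ?ltnS ?leq_pred // eqxx /=.
have -> : (q == p) = false by apply/eqP => q_p; move: p_lt_q; rewrite q_p ltnn.
by rewrite /=; lia.
Qed.

Lemma chain_reduced (p q : dfa_state chain_dfa) : indist p q -> p = q.
Proof.
wlog p_le_q : p q / p <= q.
  move=> le_case pq; case: (leqP p q) => [p_le_q | /ltnW q_le_p]; first exact: le_case.
  by apply/esym/le_case => //; apply: indist_sym.
move=> pq; apply: ord_inj; apply/eqP; rewrite eqn_leq p_le_q leqNgt; apply/negP => p_lt_q.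
have [w /andP[p_accept q_reject]] := chain_separate p_lt_q.
by have := pq w; rewrite /= p_accept (negbTE q_reject).
Qed.

Lemma chain_lang_finite : finite_lang chain_lang.
Proof. exact: finite_lang_size_le chain_lang_size. Qed.

Lemma chain_lang_state_complexity : state_complexity chain_lang n.+1.
Proof.
have := reduced_dfa_state_complexity (fun w => erefl) chain_reachable chain_reduced.
by rewrite card_ord.
Qed.

Lemma chain_lang_synt_complexity : synt_complexity chain_lang n`!.
Proof.
have := synt_complexity_word_maps (L := chain_lang) (fun w => erefl) chain_reachable
  chain_reduced (letters_advancing shift_letters) word_map_advancing advancing_word_map.
by rewrite card_advancing.
Qed.
End ChainDfa.

Theorem theorem2 :
  (forall (A : finType) (L : language A) (n : nat),
      0 < #|A| -> 3 <= n ->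
      (finite_lang L \/ cofinite_lang L) ->
      state_complexity L n ->
      synt_complexity L (n.-1)`! ->
      (n.-1)`! - (n.-2)`! <= #|A|) /\
  (forall n : nat, 3 <= n ->
      exists (A : finType) (L : language A),
        #|A| = (n.-1)`! - (n.-2)`! /\
        (finite_lang L \/ cofinite_lang L) /\
        state_complexity L n /\
        synt_complexity L (n.-1)`!).
Proof.
split=> [A L n _ _ | [//|n] n_gt1]; first exact: alphabet_lower_bound.
exists {t | t \in letters n}, (@chain_lang n); split; first by rewrite card_sig card_letters.
split; first by left; apply: chain_lang_finite.
by split; [apply: chain_lang_state_complexity | apply: chain_lang_synt_complexity].
Qed.
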